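(* Let $I\subset\mathbb R$ be an open interval, $r:I\to\mathbb R$ a smooth positive function, $C\neq 0$ a constant, $\eta\in\{1,-1\}$, and fix one choice of sign $\pm$. Assume that $$R(u):=(r r''+(r')^2+1)^2 \pm 4C^2 r^2\,(1+(r')^2)>0 \quad\text{on } I.$$ Let $\varphi:I\to\mathbb R$ be any function with $$\varphi'(u)=\eta\,\frac{\sqrt{R(u)}}{r(u)\,(1+r'(u)^2)},$$ and let $x_1,x_2:I\to\mathbb R$ be any functions with $$x_1'(u)=\sqrt{1+r'(u)^2}\,\cos\varphi(u),\qquad x_2'(u)=\sqrt{1+r'(u)^2}\,\sin\varphi(u).$$ Then $c(u)=(x_1(u),x_2(u),r(u),0)$ is a spacelike curve parameterized by arc-length with $x_1'x_2''-x_1''x_2'\neq 0$ on $I$, and the rotational surface of elliptic type $z(u,v)=(x_1(u),x_2(u),r(u)\cos v,r(u)\sin v)$ generated by $c$ is a Lorentz surface in $\mathbb E^4_2$ with constant mean curvature, namely $\langle H,H\rangle=\pm C^2$ (the same sign as chosen in $R$). Conversely, let $z(u,v)=(x_1(u),x_2(u),r(u)\cos v,r(u)\sin v)$, $u\in J$, $v\in[0,2\pi)$, be a rotational surface of elliptic type whose generating curve $(x_1,x_2,r,0)$ is spacelike, parameterized by arc-length ($(x_1')^2+(x_2')^2-(r')^2=1$), with $r>0$, and suppose $x_1'x_2''-x_1''x_2'\neq0$ on an open interval $I\subset J$ and the surface has constant mean curvature ($\langle H,H\rangle$ a nonzero constant) on $I$. Then on $I$ the functions $x_1,x_2$ arise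 from $r$ exactly by the construction above for some constant $C\neq0$, some sign $\pm$, some $\eta\in\{\pm1\}$ and suitable constants of integration.
   Context: $\mathbb E^4_2$ is $\mathbb R^4$ with the neutral metric $\langle\cdot,\cdot\rangle$ given by $g_0=dx_1^2+dx_2^2-dx_3^2-dx_4^2$. A vector $v$ is spacelike if $\langle v,v\rangle>0$, timelike if $\langle v,v\rangle<0$. A surface in $\mathbb E^4_2$ is Lorentz if its induced metric has signature $(1,1)$ (then its normal space also has signature $(1,1)$). For a surface with second fundamental form $\sigma$, the mean curvature vector is $H=\frac12\operatorname{tr}\sigma$ (trace with respect to the induced metric); the surface is said to have constant mean curvature if $\langle H,H\rangle$ is a nonzero constant. A rotational surface of elliptic type is a surface $z(u,v)=(x_1(u),x_2(u),r(u)\cos v,r(u)\sin v)$ obtained by rotating a curve $(x_1(u),x_2(u),r(u),0)$ with $r>0$ about the plane spanned by $e_1=(1,0,0,0)$ and $e_2=(0,1,0,0)$. *)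

From Stdlib Require Import Reals.
Open Scope R_scope.

Definition is_open_interval (I : R -> Prop) : Prop :=
  (exists x, I x) /\
  (forall x, I x -> exists eps, 0 < eps /\ forall y, Rabs (y - x) < eps -> I y) /\
  (forall x y w, I x -> I w -> x <= y -> y <= w -> I y).

Definition smooth_on (I : R -> Prop) (f : R -> R) : Prop :=
  exists d : nat -> R -> R,
    (forall x, I x -> d O x = f x) /\
    (forall n x, I x -> derivable_pt_lim (d n) x (d (S n) x)).

(* Vectors of R^4 and the neutral metric g0 = dx1^2+dx2^2-dx3^2-dx4^2 of E^4_2. *)
Record V4 : Type := mkV4 { c1 : R; c2 : R; c3 : R; c4 : R }.

Definition ip (a b : V4) : R :=
  c1 a * c1 b + c2 a * c2 b - c3 a * c3 b - c4 a * c4 b.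

Definition vadd (a b : V4) : V4 :=
  mkV4 (c1 a + c1 b) (c2 a + c2 b) (c3 a + c3 b) (c4 a + c4 b).
Definition vscal (k : R) (a : V4) : V4 :=
  mkV4 (k * c1 a) (k * c2 a) (k * c3 a) (k * c4 a).
Definition vsub (a b : V4) : V4 := vadd a (vscal (-1) b).

Definition deriv4 (f : R -> V4) (x : R) (l : V4) : Prop :=
  derivable_pt_lim (fun t => c1 (f t)) x (c1 l) /\
  derivable_pt_lim (fun t => c2 (f t)) x (c2 l) /\
  derivable_pt_lim (fun t => c3 (f t)) x (c3 l) /\
  derivable_pt_lim (fun t => c4 (f t)) x (c4 l).

Definition part_u (z zu : R -> R -> V4) (D : R -> R -> Prop) : Prop :=
  forall u v, D u v -> deriv4 (fun t => z t v) u (zu u v).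
Definition part_v (z zv : R -> R -> V4) (D : R -> R -> Prop) : Prop :=
  forall u v, D u v -> deriv4 (fun t => z u t) v (zv u v).

Definition partials2 (z : R -> R -> V4) (D : R -> R -> Prop)
  (zu zv zuu zuv zvv : R -> R -> V4) : Prop :=
  part_u z zu D /\ part_v z zv D /\
  part_u zu zuu D /\ part_v zu zuv D /\ part_v zv zvv D.

Definition metric_det (zu zv : V4) : R :=
  ip zu zu * ip zv zv - ip zu zv * ip zu zv.

(* Lorentz: the induced metric has signature (1,1), i.e. negative determinant *)
Definition lorentz_at (zu zv : V4) : Prop := metric_det zu zv < 0.

Definition normal_part (zu zv w : V4) : V4 :=
  let d := metric_det zu zv in
  let gi11 := ip zv zv / d in
  let gi12 := - ip zu zv / d in
  let gi22 := ip zu zu / d in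
  let a := gi11 * ip w zu + gi12 * ip w zv in
  let b := gi12 * ip w zu + gi22 * ip w zv in
  vsub w (vadd (vscal a zu) (vscal b zv)).

(* Mean curvature vector H = (1/2) tr sigma = (1/2) g^{ij} (z_ij)^normal *)
Definition mean_curv_vec (zu zv zuu zuv zvv : V4) : V4 :=
  let d := metric_det zu zv in
  let gi11 := ip zv zv / d in
  let gi12 := - ip zu zv / d in
  let gi22 := ip zu zu / d in
  vscal (1/2)
    (vadd (vscal gi11 (normal_part zu zv zuu))
      (vadd (vscal (2 * gi12) (normal_part zu zv zuv))
            (vscal gi22 (normal_part zu zv zvv)))).

Definition HH (zu zv zuu zuv zvv : V4) : R :=
  let H := mean_curv_vec zu zv zuu zuv zvv in ip H H.

Definition rot_surface (x1 x2 r : R -> R) : R -> R -> V4 :=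
  fun u v => mkV4 (x1 u) (x2 u) (r u * cos v) (r u * sin v).

Definition profile (x1 x2 r : R -> R) : R -> V4 :=
  fun u => mkV4 (x1 u) (x2 u) (r u) 0.

(* R(u) = (r r'' + r'^2 + 1)^2 + s * 4 C^2 r^2 (1 + r'^2),  s = +1 or -1 *)
Definition Rfun (s C : R) (r r1 r2 : R -> R) (u : R) : R :=
  (r u * r2 u + r1 u ^ 2 + 1) ^ 2 + s * (4 * C ^ 2 * r u ^ 2 * (1 + r1 u ^ 2)).

From Pilot Require Import Defs.
From Stdlib Require Import Reals Lra.
From Coquelicot Require Import Coquelicot.
Open Scope R_scope.

(* For the rotational surface generated by an arc-length profile (x1, x2, r, 0) the
   induced metric is diag(1, -r^2), and
     4 <H,H> = x1''^2 + x2''^2 - r''^2 - 2 r''/r - (1 + r'^2)/r^2.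
   Using x1'^2 + x2'^2 - r'^2 = 1 and its derivative, this is the same as
     (r r'' + r'^2 + 1)^2 + 4 <H,H> r^2 (1 + r'^2) = (r k)^2,   k = x1' x2'' - x1'' x2',
   so <H,H> = +-C^2 exactly when R = (r k)^2.  Writing
   (x1', x2') = sqrt(1 + r'^2) (cos phi, sin phi) one has k = (1 + r'^2) phi', which is the formula for phi' in both directions.  In the
   converse, k has a constant sign eta on I by continuity, phi is a primitive of k/(1 + r'^2)
   started at the polar angle of (x1', x2'), and (x1', x2') stays in polar form because its
   coordinates in the frame rotated by phi have zero derivative. *)

Lemma cos_sin_sq t : cos t ^ 2 + sin t ^ 2 = 1.
Proof. rewrite <- (sin2_cos2 t); unfold Rsqr; ring. Qed.

Lemma one_plus_sq_pos x : 0 < 1 + x ^ 2.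
Proof. nra. Qed.

Lemma sqrt_one_plus_sq_pos x : 0 < sqrt (1 + x ^ 2).
Proof. apply sqrt_lt_R0, one_plus_sq_pos. Qed.

Lemma sqrt_one_plus_sq_sq x : sqrt (1 + x ^ 2) ^ 2 = 1 + x ^ 2.
Proof. apply pow2_sqrt, Rlt_le, one_plus_sq_pos. Qed.

Lemma exists_angle e1 e2 : e1 ^ 2 + e2 ^ 2 = 1 -> exists t, cos t = e1 /\ sin t = e2.
Proof.
  intros H. assert (Hb : -1 <= e1 <= 1) by nra.
  assert (Hs : sqrt (1 - e1²) = Rabs e2).
  { rewrite <- sqrt_Rsqr_abs. f_equal. unfold Rsqr. lra. }
  destruct (Rle_or_lt 0 e2).
  - exists (acos e1). rewrite cos_acos, sin_acos, Hs by auto. now rewrite Rabs_right by lra.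
  - exists (- acos e1). rewrite cos_neg, sin_neg, cos_acos, sin_acos, Hs by auto.
    rewrite Rabs_left by lra. split; [reflexivity|ring].
Qed.

Lemma signed_square k : k <> 0 -> exists s C, C <> 0 /\ (s = 1 \/ s = -1) /\ k = s * C ^ 2.
Proof.
  intros Hk. destruct (Rlt_or_le 0 k) as [Hpos|Hnpos].
  - exists 1, (sqrt k). repeat split.
    + now apply Rgt_not_eq, sqrt_lt_R0.
    + now left.
    + rewrite pow2_sqrt; lra.
  - assert (k < 0) by (destruct Hnpos; [assumption|contradiction]).
    exists (-1), (sqrt (- k)). repeat split.
    + apply Rgt_not_eq, sqrt_lt_R0. lra.
    + now right.
    + rewrite pow2_sqrt; lra.
Qed.

Lemma exists_polar_angle a b w : 0 < w -> a ^ 2 + b ^ 2 = w ^ 2 ->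
  exists t, a = w * cos t /\ b = w * sin t.
Proof.
  intros Hw Hab. destruct (exists_angle (a / w) (b / w)) as (t & Hcos & Hsin).
  { transitivity ((a ^ 2 + b ^ 2) / w ^ 2); [field; lra|]. rewrite Hab. field. lra. }
  exists t. rewrite Hcos, Hsin. split; field; lra.
Qed.

Lemma D_eq f x l l' : derivable_pt_lim f x l -> l = l' -> derivable_pt_lim f x l'.
Proof. now intros H <-. Qed.

Lemma D_const c x : derivable_pt_lim (fun _ => c) x 0.
Proof. exact (derivable_pt_lim_const c x). Qed.

Lemma D_plus f g x l1 l2 : derivable_pt_lim f x l1 -> derivable_pt_lim g x l2 ->
  derivable_pt_lim (fun t => f t + g t) x (l1 + l2).
Proof. exact (derivable_pt_lim_plus f g x l1 l2). Qed.

Lemma D_minus f g x l1 l2 : derivable_pt_lim f x l1 -> derivable_pt_lim g x l2 ->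
  derivable_pt_lim (fun t => f t - g t) x (l1 - l2).
Proof. exact (derivable_pt_lim_minus f g x l1 l2). Qed.

Lemma D_opp f x l : derivable_pt_lim f x l -> derivable_pt_lim (fun t => - f t) x (- l).
Proof. exact (derivable_pt_lim_opp f x l). Qed.

Lemma D_mult f g x l1 l2 : derivable_pt_lim f x l1 -> derivable_pt_lim g x l2 ->
  derivable_pt_lim (fun t => f t * g t) x (l1 * g x + f x * l2).
Proof. exact (derivable_pt_lim_mult f g x l1 l2). Qed.

Lemma D_div f g x l1 l2 : derivable_pt_lim f x l1 -> derivable_pt_lim g x l2 -> g x <> 0 ->
  derivable_pt_lim (fun t => f t / g t) x ((l1 * g x - l2 * f x) / (g x * g x)).
Proof. exact (derivable_pt_lim_div f g x l1 l2). Qed.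

Lemma D_sq f x l : derivable_pt_lim f x l -> derivable_pt_lim (fun t => f t ^ 2) x (2 * f x * l).
Proof.
  intros Hf. apply D_eq with (l * f x + f x * l); [|ring].
  apply (derivable_pt_lim_ext (fun t => f t * f t)); [intros; ring|].
  now apply D_mult.
Qed.

Lemma D_mult_const f c x l : derivable_pt_lim f x l ->
  derivable_pt_lim (fun t => f t * c) x (l * c).
Proof.
  intros Hf. apply D_eq with (l * c + f x * 0); [|ring].
  apply (D_mult f (fun _ => c)); [exact Hf | apply D_const].
Qed.

Lemma D_const_mult c f x l : derivable_pt_lim f x l ->
  derivable_pt_lim (fun t => c * f t) x (c * l).
Proof.
  intros Hf. apply D_eq with (0 * f x + c * l); [|ring].
  apply (D_mult (fun _ => c) f); [apply D_const | exact Hf].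
Qed.

Lemma D_cos_comp f x l : derivable_pt_lim f x l ->
  derivable_pt_lim (fun t => cos (f t)) x (- sin (f x) * l).
Proof. intros Hf. exact (derivable_pt_lim_comp f cos x l _ Hf (derivable_pt_lim_cos (f x))). Qed.

Lemma D_sin_comp f x l : derivable_pt_lim f x l ->
  derivable_pt_lim (fun t => sin (f t)) x (cos (f x) * l).
Proof. intros Hf. exact (derivable_pt_lim_comp f sin x l _ Hf (derivable_pt_lim_sin (f x))). Qed.

Lemma D_sqrt_one_plus_sq f x l : derivable_pt_lim f x l ->
  derivable_pt_lim (fun t => sqrt (1 + f t ^ 2)) x (f x * l / sqrt (1 + f x ^ 2)).
Proof.
  intros Hf. assert (Hsqrt := sqrt_one_plus_sq_pos (f x)).
  apply D_eq with (/ (2 * sqrt (1 + f x ^ 2)) * (0 + 2 * f x * l)).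
  - apply (derivable_pt_lim_comp (fun t => 1 + f t ^ 2) sqrt).
    + now apply D_plus; [apply D_const | apply D_sq].
    + apply derivable_pt_lim_sqrt, one_plus_sq_pos.
  - field; lra.
Qed.

Lemma open_interval_locally I x : is_open_interval I -> I x -> locally x I.
Proof.
  intros [_ [Hopen _]] Hx. destruct (Hopen x Hx) as [e [He Hball]].
  exists (mkposreal e He). exact Hball.
Qed.

Lemma D_ext_loc f g x l : locally x (fun t => f t = g t) ->
  derivable_pt_lim f x l -> derivable_pt_lim g x l.
Proof.
  intros Hfg Hf. apply is_derive_Reals, is_derive_ext_loc with f; [exact Hfg|].
  now apply is_derive_Reals.
Qed.

Lemma D_ext_on I f g x l : is_open_interval I -> I x -> (forall t, I t -> f t = g t) ->
  derivable_pt_lim f x l -> derivable_pt_lim g x l.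
Proof.
  intros HI Hx Hfg. apply D_ext_loc.
  exact (filter_imp _ _ Hfg (open_interval_locally I x HI Hx)).
Qed.

Lemma open_interval_convex I a b x : is_open_interval I -> I a -> I b ->
  Rmin a b <= x <= Rmax a b -> I x.
Proof.
  intros [_ [_ Hconv]] Ha Hb Hx.
  destruct (Rle_dec a b).
  - rewrite Rmin_left, Rmax_right in Hx by lra. now apply Hconv with a b.
  - rewrite Rmin_right, Rmax_left in Hx by lra. now apply Hconv with b a.
Qed.

Lemma zero_derivative_const I h : is_open_interval I ->
  (forall u, I u -> derivable_pt_lim h u 0) -> forall u v, I u -> I v -> h u = h v.
Proof.
  intros HI Hd u v Hu Hv.
  assert (Hseg : forall x, Rmin u v <= x <= Rmax u v -> I x)
    by (intros; now apply open_interval_convex with u v).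
  destruct (MVT_gen h u v (fun _ => 0)) as [c [_ Hc]].
  - intros x Hx. apply is_derive_Reals, Hd, Hseg. lra.
  - intros x Hx. apply derivable_continuous_pt. exists 0. apply Hd, Hseg. lra.
  - lra.
Qed.

Lemma continuous_nonzero_same_sign I h : is_open_interval I ->
  (forall u, I u -> continuity_pt h u) -> (forall u, I u -> h u <> 0) ->
  forall u v, I u -> I v -> 0 < h u * h v.
Proof.
  intros HI Hc Hn.
  assert (Hlt : forall x y, I x -> I y -> x < y -> 0 < h x * h y).
  { intros x y Hx Hy Hxy.
    assert (Hseg : forall z, x <= z <= y -> I z).
    { intros z Hz. apply open_interval_convex with x y; auto.
      rewrite Rmin_left, Rmax_right; lra. }
    destruct (Rlt_or_le 0 (h x * h y)) as [H|H]; [exact H|exfalso].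
    assert (Hx0 := Hn x Hx). assert (Hy0 := Hn y Hy).
    destruct (Rlt_or_le (h x) 0) as [Hneg|Hnneg].
    - assert (Hy_pos : 0 < h y) by (destruct (Rlt_or_le 0 (h y)); [assumption|nra]).
      destruct (Ranalysis5.IVT_interv h x y (fun a Ha => Hc a (Hseg a Ha)) Hxy Hneg Hy_pos)
        as [z [Hz Hz0]].
      exact (Hn z (Hseg z Hz) Hz0).
    - assert (Hy_neg : h y < 0) by (destruct (Rlt_or_le (h y) 0); [assumption|nra]).
      destruct (Ranalysis5.IVT_interv (fun t => - h t) x y
                  (fun a Ha => continuity_pt_opp h a (Hc a (Hseg a Ha))) Hxy)
        as [z [Hz Hz0]]; [lra|lra|].
      apply (Hn z (Hseg z Hz)). lra. }
  intros u v Hu Hv. destruct (Rtotal_order u v) as [H|[<-|H]].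
  - now apply Hlt.
  - assert (Hu0 := Hn u Hu). nra.
  - rewrite Rmult_comm. now apply Hlt.
Qed.

Lemma continuous_nonzero_sign I h : is_open_interval I ->
  (forall u, I u -> continuity_pt h u) -> (forall u, I u -> h u <> 0) ->
  exists eta, (eta = 1 \/ eta = -1) /\ forall u, I u -> h u = eta * Rabs (h u).
Proof.
  intros HI Hc Hn. destruct (proj1 HI) as [u0 Hu0].
  assert (Hsign := continuous_nonzero_same_sign I h HI Hc Hn).
  destruct (Rlt_or_le 0 (h u0)) as [Hpos|Hnpos].
  - exists 1. split; [now left|]. intros u Hu.
    specialize (Hsign u u0 Hu Hu0). rewrite Rabs_right by nra. ring.
  - exists (-1). split; [now right|]. intros u Hu.
    assert (h u0 < 0) by (destruct Hnpos; [assumption|now destruct (Hn u0 Hu0)]).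
    specialize (Hsign u u0 Hu Hu0). rewrite Rabs_left by nra. ring.
Qed.

Lemma exists_antiderivative I f : is_open_interval I ->
  (forall u, I u -> continuity_pt f u) ->
  forall u0 c, I u0 -> exists F, F u0 = c /\ forall u, I u -> derivable_pt_lim F u (f u).
Proof.
  intros HI Hc u0 c Hu0. exists (fun t => c + RInt f u0 t). split.
  - rewrite RInt_point. apply Rplus_0_r.
  - intros u Hu. apply D_eq with (0 + f u); [|ring].
    apply D_plus; [apply D_const|]. apply is_derive_Reals, (is_derive_RInt f _ u0).
    + apply (filter_imp I); [|now apply open_interval_locally].
      intros t Ht. apply (@RInt_correct R_CompleteNormedModule).
      apply (@ex_RInt_continuous R_CompleteNormedModule). intros z Hz.
      apply continuity_pt_filterlim, Hc. now apply open_interval_convex with u0 t.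
    + now apply continuity_pt_filterlim, Hc.
Qed.

Lemma smooth_on_subset I J f : (forall u, I u -> J u) -> smooth_on J f -> smooth_on I f.
Proof. intros HIJ [d [Hd0 Hd]]. exists d. split; auto. Qed.

Lemma smooth_on_derivative I f f' : is_open_interval I -> smooth_on I f ->
  (forall u, I u -> derivable_pt_lim f u (f' u)) -> smooth_on I f'.
Proof.
  intros HI [d [Hd0 Hd]] Hf. exists (fun n => d (S n)). split; [|auto].
  intros x Hx. apply (uniqueness_limite f x); [|now apply Hf].
  apply D_ext_on with I (d O); auto.
Qed.

Lemma smooth_on_continuous I f u : is_open_interval I -> smooth_on I f -> I u ->
  continuity_pt f u.
Proof.
  intros HI [d [Hd0 Hd]] Hu. apply derivable_continuous_pt. exists (d 1%nat u).
  apply D_ext_on with I (d O); auto.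
Qed.

(** * Polar form of a plane curve *)

Section PolarForm.

Variables (I : R -> Prop) (a b a' b' W W' th th' : R -> R).
Hypotheses (HI : is_open_interval I)
  (Ha : forall u, I u -> derivable_pt_lim a u (a' u))
  (Hb : forall u, I u -> derivable_pt_lim b u (b' u))
  (HW : forall u, I u -> derivable_pt_lim W u (W' u))
  (Hth : forall u, I u -> derivable_pt_lim th u (th' u))
  (HW_pos : forall u, I u -> 0 < W u)
  (Hnorm : forall u, I u -> a u ^ 2 + b u ^ 2 = W u ^ 2)
  (HW' : forall u, I u -> W u * W' u = a u * a' u + b u * b' u)
  (Hth' : forall u, I u -> W u ^ 2 * th' u = a u * b' u - a' u * b u).

(* The coordinates of (a, b) / W in the frame rotated by th. *)
Let P u := (a u * cos (th u) + b u * sin (th u)) / W u.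
Let Q u := (b u * cos (th u) - a u * sin (th u)) / W u.

Lemma polar_P_const u v : I u -> I v -> P u = P v.
Proof.
  apply (zero_derivative_const I P HI). intros x Hx.
  assert (HWx := HW_pos x Hx).
  eapply D_eq.
  - apply D_div; [|now apply HW | lra].
    apply D_plus; apply D_mult; auto using D_cos_comp, D_sin_comp.
  - cbv beta. set (c := cos (th x)). set (s := sin (th x)).
    transitivity (((a' x * c + b' x * s) * (W x ^ 2 - (a x ^ 2 + b x ^ 2))
                   + (b x * c - a x * s) * (W x ^ 2 * th' x - (a x * b' x - a' x * b x))
                   - (a x * c + b x * s) * (W x * W' x - (a x * a' x + b x * b' x)))
                  / W x ^ 3).
    + field. lra.
    + rewrite Hnorm, HW', Hth' by exact Hx. field. lra.
Qed.

Lemma polar_Q_const u v : I u -> I v -> Q u = Q v.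
Proof.
  apply (zero_derivative_const I Q HI). intros x Hx.
  assert (HWx := HW_pos x Hx).
  eapply D_eq.
  - apply D_div; [|now apply HW | lra].
    apply D_minus; apply D_mult; auto using D_cos_comp, D_sin_comp.
  - cbv beta. set (c := cos (th x)). set (s := sin (th x)).
    transitivity (((b' x * c - a' x * s) * (W x ^ 2 - (a x ^ 2 + b x ^ 2))
                   - (a x * c + b x * s) * (W x ^ 2 * th' x - (a x * b' x - a' x * b x))
                   - (b x * c - a x * s) * (W x * W' x - (a x * a' x + b x * b' x)))
                  / W x ^ 3).
    + field. lra.
    + rewrite Hnorm, HW', Hth' by exact Hx. field. lra.
Qed.

Lemma polar_form u0 : I u0 ->
  a u0 = W u0 * cos (th u0) -> b u0 = W u0 * sin (th u0) ->
  forall u, I u -> a u = W u * cos (th u) /\ b u = W u * sin (th u).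
Proof.
  intros Hu0 Ha0 Hb0 u Hu.
  assert (HWu := HW_pos u Hu). assert (HWu0 := HW_pos u0 Hu0).
  assert (HP : P u = 1).
  { rewrite (polar_P_const u u0 Hu Hu0). unfold P. rewrite Ha0, Hb0.
    transitivity (cos (th u0) ^ 2 + sin (th u0) ^ 2); [field; lra | apply cos_sin_sq]. }
  assert (HQ : Q u = 0).
  { rewrite (polar_Q_const u u0 Hu Hu0). unfold Q. rewrite Ha0, Hb0. field. lra. }
  unfold P, Q in HP, HQ. assert (Hcs := cos_sin_sq (th u)).
  split.
  - transitivity (W u * ((a u * cos (th u) + b u * sin (th u)) / W u * cos (th u)
                         - (b u * cos (th u) - a u * sin (th u)) / W u * sin (th u))).
    + transitivity (a u * (cos (th u) ^ 2 + sin (th u) ^ 2)); [rewrite Hcs; ring | field; lra].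
    + rewrite HP, HQ. ring.
  - transitivity (W u * ((a u * cos (th u) + b u * sin (th u)) / W u * sin (th u)
                         + (b u * cos (th u) - a u * sin (th u)) / W u * cos (th u))).
    + transitivity (b u * (cos (th u) ^ 2 + sin (th u) ^ 2)); [rewrite Hcs; ring | field; lra].
    + rewrite HP, HQ. ring.
Qed.

End PolarForm.

Definition rot_surface_dv (r : R -> R) : R -> R -> V4 :=
  fun u v => mkV4 0 0 (- (r u * sin v)) (r u * cos v).

Lemma part_u_rot_surface (I : R -> Prop) x1 x2 r x1d x2d r1 :
  (forall u, I u -> derivable_pt_lim x1 u (x1d u)) ->
  (forall u, I u -> derivable_pt_lim x2 u (x2d u)) ->
  (forall u, I u -> derivable_pt_lim r u (r1 u)) ->
  part_u (rot_surface x1 x2 r) (rot_surface x1d x2d r1) (fun u _ => I u).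
Proof.
  intros Hx1 Hx2 Hr u v Hu. unfold deriv4, rot_surface; cbn.
  repeat split; auto using D_mult_const.
Qed.

Lemma part_v_rot_surface D x1 x2 r : part_v (rot_surface x1 x2 r) (rot_surface_dv r) D.
Proof.
  intros u v _. unfold deriv4, rot_surface, rot_surface_dv; cbn.
  repeat split; try apply D_const.
  - apply D_eq with (r u * - sin v); [|ring].
    apply D_const_mult, derivable_pt_lim_cos.
  - apply D_const_mult, derivable_pt_lim_sin.
Qed.

Lemma part_v_rot_surface_dv D r :
  part_v (rot_surface_dv r) (rot_surface (fun _ => 0) (fun _ => 0) (fun u => - r u)) D.
Proof.
  intros u v _. unfold deriv4, rot_surface, rot_surface_dv; cbn.
  repeat split; try apply D_const.
  - apply D_eq with (- (r u * cos v)); [|ring].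
    apply D_opp, D_const_mult, derivable_pt_lim_sin.
  - apply D_eq with (r u * - sin v); [|ring].
    apply D_const_mult, derivable_pt_lim_cos.
Qed.

Lemma deriv4_unique f x l l' : deriv4 f x l -> deriv4 f x l' -> l = l'.
Proof.
  destruct l, l'. intros (H1 & H2 & H3 & H4) (H1' & H2' & H3' & H4'). cbn in *.
  f_equal; eapply uniqueness_limite; eassumption.
Qed.

Lemma deriv4_ext_loc (f g : R -> V4) x l : locally x (fun t => f t = g t) ->
  deriv4 f x l -> deriv4 g x l.
Proof.
  intros Hfg (H1 & H2 & H3 & H4).
  assert (Hc : forall c : V4 -> R, locally x (fun t => c (f t) = c (g t)))
    by (intros c; apply (filter_imp (fun t => f t = g t)); [congruence | exact Hfg]).
  repeat split; (eapply D_ext_loc; [|eassumption]); apply Hc.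
Qed.

Lemma part_u_congr I z z' zu zu' : is_open_interval I ->
  (forall u v, I u -> z u v = z' u v) ->
  part_u z zu (fun u _ => I u) -> part_u z' zu' (fun u _ => I u) ->
  forall u v, I u -> zu u v = zu' u v.
Proof.
  intros HI Hzz' Hz Hz' u v Hu.
  apply deriv4_unique with (fun t => z' t v) u; [|now apply Hz'].
  apply deriv4_ext_loc with (fun t => z t v); [|now apply Hz].
  apply (filter_imp I); [auto | now apply open_interval_locally].
Qed.

Lemma part_v_congr I z z' zv zv' : (forall u v, I u -> z u v = z' u v) ->
  part_v z zv (fun u _ => I u) -> part_v z' zv' (fun u _ => I u) ->
  forall u v, I u -> zv u v = zv' u v.
Proof.
  intros Hzz' Hz Hz' u v Hu.
  apply deriv4_unique with (fun t => z' u t) v; [|now apply Hz'].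
  apply deriv4_ext_loc with (fun t => z u t); [|now apply Hz].
  apply filter_forall. auto.
Qed.

Section RotSurfacePartials.

Variables (I : R -> Prop) (x1 x2 r x1d x2d r1 x1dd x2dd r2 : R -> R).
Hypotheses (Hx1 : forall u, I u -> derivable_pt_lim x1 u (x1d u))
  (Hx2 : forall u, I u -> derivable_pt_lim x2 u (x2d u))
  (Hr : forall u, I u -> derivable_pt_lim r u (r1 u))
  (Hx1d : forall u, I u -> derivable_pt_lim x1d u (x1dd u))
  (Hx2d : forall u, I u -> derivable_pt_lim x2d u (x2dd u))
  (Hr1 : forall u, I u -> derivable_pt_lim r1 u (r2 u)).

Lemma rot_surface_partials2 :
  partials2 (rot_surface x1 x2 r) (fun u _ => I u)
    (rot_surface x1d x2d r1) (rot_surface_dv r) (rot_surface x1dd x2dd r2) (rot_surface_dv r1)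
    (rot_surface (fun _ => 0) (fun _ => 0) (fun u => - r u)).
Proof.
  split; [|split; [|split; [|split]]];
    auto using part_u_rot_surface, part_v_rot_surface, part_v_rot_surface_dv.
Qed.

Lemma rot_surface_partials2_unique zu zv zuu zuv zvv : is_open_interval I ->
  partials2 (rot_surface x1 x2 r) (fun u _ => I u) zu zv zuu zuv zvv ->
  forall u v, I u ->
    zu u v = rot_surface x1d x2d r1 u v /\ zv u v = rot_surface_dv r u v /\
    zuu u v = rot_surface x1dd x2dd r2 u v /\
    zvv u v = rot_surface (fun _ => 0) (fun _ => 0) (fun u => - r u) u v.
Proof.
  intros HI (Pu & Pv & Puu & _ & Pvv).
  destruct rot_surface_partials2 as (Pu' & Pv' & Puu' & _ & Pvv').
  assert (Hzu := part_u_congr I _ _ _ _ HI (fun _ _ _ => eq_refl) Pu Pu').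
  assert (Hzv := part_v_congr I _ _ _ _ (fun _ _ _ => eq_refl) Pv Pv').
  intros u v Hu. repeat split; auto.
  - exact (part_u_congr I _ _ _ _ HI Hzu Puu Puu' u v Hu).
  - exact (part_v_congr I _ _ _ _ Hzv Pvv Pvv' u v Hu).
Qed.

End RotSurfacePartials.

Lemma ip_rot_rot (a b p a' b' p' v : R) :
  ip (mkV4 a b (p * cos v) (p * sin v)) (mkV4 a' b' (p' * cos v) (p' * sin v))
  = a * a' + b * b' - p * p'.
Proof.
  unfold ip; cbn. transitivity (a * a' + b * b' - p * p' * (cos v ^ 2 + sin v ^ 2)).
  - ring.
  - rewrite cos_sin_sq. ring.
Qed.

Lemma ip_rot_surface_dv (a b p r v : R) :
  ip (mkV4 a b (p * cos v) (p * sin v)) (mkV4 0 0 (- (r * sin v)) (r * cos v)) = 0.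
Proof. unfold ip; cbn. ring. Qed.

Lemma ip_v_v (r v : R) :
  ip (mkV4 0 0 (- (r * sin v)) (r * cos v)) (mkV4 0 0 (- (r * sin v)) (r * cos v)) = - r ^ 2.
Proof.
  unfold ip; cbn. transitivity (- r ^ 2 * (cos v ^ 2 + sin v ^ 2)).
  - ring.
  - rewrite cos_sin_sq. ring.
Qed.

Lemma metric_det_rot (a b p r v : R) : a ^ 2 + b ^ 2 - p ^ 2 = 1 ->
  metric_det (mkV4 a b (p * cos v) (p * sin v)) (mkV4 0 0 (- (r * sin v)) (r * cos v))
  = - r ^ 2.
Proof.
  intros Harc. unfold metric_det. rewrite ip_rot_rot, ip_rot_surface_dv, ip_v_v.
  replace (a * a + b * b - p * p) with (a ^ 2 + b ^ 2 - p ^ 2) by ring.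
  rewrite Harc. ring.
Qed.

Lemma HH_rot (a b p a' b' p' r v : R) (w : V4) : r <> 0 ->
  a ^ 2 + b ^ 2 - p ^ 2 = 1 -> a * a' + b * b' - p * p' = 0 ->
  HH (mkV4 a b (p * cos v) (p * sin v)) (mkV4 0 0 (- (r * sin v)) (r * cos v))
     (mkV4 a' b' (p' * cos v) (p' * sin v)) w (mkV4 0 0 (- r * cos v) (- r * sin v))
  = 1 / 4 * (a' ^ 2 + b' ^ 2 - p' ^ 2 - 2 * p' / r - (1 + p ^ 2) / r ^ 2).
Proof.
  intros Hr Harc Horth. assert (Hr2 : r ^ 2 <> 0) by (apply pow_nonzero; exact Hr).
  (* the induced metric is diag(1, -r^2), so w = z_uv does not enter H *)
  assert (H_vec : mean_curv_vec (mkV4 a b (p * cos v) (p * sin v))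
      (mkV4 0 0 (- (r * sin v)) (r * cos v)) (mkV4 a' b' (p' * cos v) (p' * sin v)) w
      (mkV4 0 0 (- r * cos v) (- r * sin v)) =
    mkV4 ((a' + p * a / r) / 2) ((b' + p * b / r) / 2)
         (cos v * (p' + (1 + p ^ 2) / r) / 2) (sin v * (p' + (1 + p ^ 2) / r) / 2)).
  { unfold mean_curv_vec, normal_part, metric_det. cbv zeta.
    rewrite !ip_rot_rot, !ip_rot_surface_dv, ip_v_v.
    replace (a * a + b * b - p * p) with 1 by (rewrite <- Harc; ring).
    replace (a' * a + b' * b - p' * p) with 0 by (rewrite <- Horth; ring).
    unfold vsub, vscal, vadd; cbn.
    f_equal; field; exact Hr. }
  unfold HH. rewrite H_vec. unfold ip; cbn.
  transitivity (1 / 4 * (a' ^ 2 + b' ^ 2 - p' ^ 2 - 2 * p' / r - (1 + p ^ 2) / r ^ 2)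
    + 1 / 4 * (2 * p / r * (a * a' + b * b' - p * p')
               + p ^ 2 / r ^ 2 * (a ^ 2 + b ^ 2 - p ^ 2 - 1)
               - (cos v ^ 2 + sin v ^ 2 - 1) * (p' + (1 + p ^ 2) / r) ^ 2)).
  - field. exact Hr.
  - rewrite Harc, Horth, cos_sin_sq. field. exact Hr.
Qed.

Lemma HH_rot_curvature (a b p a' b' p' r k : R) : r <> 0 ->
  a ^ 2 + b ^ 2 - p ^ 2 = 1 -> a * a' + b * b' - p * p' = 0 ->
  k = 1 / 4 * (a' ^ 2 + b' ^ 2 - p' ^ 2 - 2 * p' / r - (1 + p ^ 2) / r ^ 2) ->
  (r * p' + p ^ 2 + 1) ^ 2 + 4 * k * r ^ 2 * (1 + p ^ 2) = (r * (a * b' - a' * b)) ^ 2.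
Proof.
  intros Hr Harc Horth ->.
  transitivity ((r * (a * b' - a' * b)) ^ 2
    + r ^ 2 * (- (a ^ 2 + b ^ 2 - p ^ 2 - 1) * (a' ^ 2 + b' ^ 2)
               + (a * a' + b * b' - p * p') * (a * a' + b * b' + p * p'))).
  - field. exact Hr.
  - rewrite Harc, Horth. ring.
Qed.

(** * From the profile to the surface *)

Section ProfileToSurface.

Variables (I : R -> Prop) (r r1 r2 phi x1 x2 : R -> R) (C s eta : R).
Hypotheses (Hr : forall u, I u -> derivable_pt_lim r u (r1 u))
  (Hr1 : forall u, I u -> derivable_pt_lim r1 u (r2 u))
  (Hr_pos : forall u, I u -> 0 < r u)
  (Heta : eta = 1 \/ eta = -1)
  (HR_pos : forall u, I u -> 0 < Rfun s C r r1 r2 u)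
  (Hphi : forall u, I u -> derivable_pt_lim phi u
            (eta * sqrt (Rfun s C r r1 r2 u) / (r u * (1 + r1 u ^ 2))))
  (Hx1 : forall u, I u -> derivable_pt_lim x1 u (sqrt (1 + r1 u ^ 2) * cos (phi u)))
  (Hx2 : forall u, I u -> derivable_pt_lim x2 u (sqrt (1 + r1 u ^ 2) * sin (phi u))).

Let W u := sqrt (1 + r1 u ^ 2).
Let phi' u := eta * sqrt (Rfun s C r r1 r2 u) / (r u * (1 + r1 u ^ 2)).
Let x1d u := W u * cos (phi u).
Let x2d u := W u * sin (phi u).
Let x1dd u := r1 u * r2 u / W u * cos (phi u) + W u * (- sin (phi u) * phi' u).
Let x2dd u := r1 u * r2 u / W u * sin (phi u) + W u * (cos (phi u) * phi' u).

Lemma W_sq u : W u ^ 2 = 1 + r1 u ^ 2.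
Proof. apply sqrt_one_plus_sq_sq. Qed.

Lemma W_pos u : 0 < W u.
Proof. apply sqrt_one_plus_sq_pos. Qed.

Lemma x1d_derivative u : I u -> derivable_pt_lim x1d u (x1dd u).
Proof.
  intros Hu.
  apply (D_mult W (fun t => cos (phi t))); [apply D_sqrt_one_plus_sq | apply D_cos_comp]; auto.
Qed.

Lemma x2d_derivative u : I u -> derivable_pt_lim x2d u (x2dd u).
Proof.
  intros Hu.
  apply (D_mult W (fun t => sin (phi t))); [apply D_sqrt_one_plus_sq | apply D_sin_comp]; auto.
Qed.

Lemma profile_speed u : x1d u ^ 2 + x2d u ^ 2 - r1 u ^ 2 = 1.
Proof.
  transitivity (W u ^ 2 * (cos (phi u) ^ 2 + sin (phi u) ^ 2) - r1 u ^ 2).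
  - unfold x1d, x2d. ring.
  - rewrite cos_sin_sq, W_sq. ring.
Qed.

Lemma profile_orth u : x1d u * x1dd u + x2d u * x2dd u - r1 u * r2 u = 0.
Proof.
  assert (HWu := W_pos u).
  transitivity (r1 u * r2 u * (cos (phi u) ^ 2 + sin (phi u) ^ 2) - r1 u * r2 u).
  - unfold x1d, x2d, x1dd, x2dd. field. lra.
  - rewrite cos_sin_sq. ring.
Qed.

Lemma profile_curvature u : x1d u * x2dd u - x1dd u * x2d u = (1 + r1 u ^ 2) * phi' u.
Proof.
  transitivity (W u ^ 2 * (cos (phi u) ^ 2 + sin (phi u) ^ 2) * phi' u).
  - unfold x1d, x2d, x1dd, x2dd. ring.
  - rewrite cos_sin_sq, W_sq. ring.
Qed.

Lemma profile_curvature_sq u : I u ->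
  (r u * (x1d u * x2dd u - x1dd u * x2d u)) ^ 2 = Rfun s C r r1 r2 u.
Proof.
  intros Hu. rewrite profile_curvature. unfold phi'.
  assert (Hr_u := Hr_pos u Hu). assert (Hp := one_plus_sq_pos (r1 u)).
  transitivity (eta ^ 2 * sqrt (Rfun s C r r1 r2 u) ^ 2).
  - field. lra.
  - rewrite pow2_sqrt by (left; auto). destruct Heta as [-> | ->]; ring.
Qed.

Lemma profile_arc_length : exists c' : R -> V4, forall u, I u ->
  deriv4 (profile x1 x2 r) u (c' u) /\ ip (c' u) (c' u) = 1.
Proof.
  exists (fun u => mkV4 (x1d u) (x2d u) (r1 u) 0). intros u Hu. split.
  - repeat split; cbn; auto using D_const.
  - unfold ip; cbn [Defs.c1 Defs.c2 Defs.c3 Defs.c4]. rewrite <- (profile_speed u). ring.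
Qed.

Lemma profile_curvature_neq0 : exists x1d x2d x1dd x2dd : R -> R, forall u, I u ->
  derivable_pt_lim x1 u (x1d u) /\ derivable_pt_lim x2 u (x2d u) /\
  derivable_pt_lim x1d u (x1dd u) /\ derivable_pt_lim x2d u (x2dd u) /\
  x1d u * x2dd u - x1dd u * x2d u <> 0.
Proof.
  exists x1d, x2d, x1dd, x2dd. intros u Hu.
  repeat split; auto using x1d_derivative, x2d_derivative.
  rewrite profile_curvature. unfold phi'.
  assert (Hsqrt := sqrt_lt_R0 _ (HR_pos u Hu)).
  assert (Hr_u := Hr_pos u Hu). assert (Hp := one_plus_sq_pos (r1 u)).
  assert (eta <> 0) by (destruct Heta; lra).
  apply Rmult_integral_contrapositive_currified; [lra|].
  apply Rmult_integral_contrapositive_currified; [|apply Rinv_neq_0_compat; nra].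
  apply Rmult_integral_contrapositive_currified; lra.
Qed.

Lemma rot_surface_lorentz_cmc : exists zu zv zuu zuv zvv : R -> R -> V4,
  partials2 (rot_surface x1 x2 r) (fun u _ => I u) zu zv zuu zuv zvv /\
  forall u v, I u ->
    lorentz_at (zu u v) (zv u v) /\ HH (zu u v) (zv u v) (zuu u v) (zuv u v) (zvv u v) = s * C ^ 2.
Proof.
  eexists _, _, _, _, _. split.
  { apply (rot_surface_partials2 I x1 x2 r x1d x2d r1 x1dd x2dd r2);
      auto using x1d_derivative, x2d_derivative. }
  intros u v Hu. unfold rot_surface, rot_surface_dv.
  assert (Hr_u := Hr_pos u Hu). assert (Hp := one_plus_sq_pos (r1 u)).
  split.
  - unfold lorentz_at. rewrite metric_det_rot by apply profile_speed. nra.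
  - rewrite HH_rot by (apply profile_speed || apply profile_orth || lra).
    set (k := 1 / 4 * _).
    assert (Hk := HH_rot_curvature _ _ _ _ _ _ _ k (Rgt_not_eq _ _ Hr_u)
                    (profile_speed u) (profile_orth u) eq_refl).
    rewrite profile_curvature_sq in Hk by exact Hu. unfold Rfun in Hk.
    apply Rmult_eq_reg_r with (4 * r u ^ 2 * (1 + r1 u ^ 2)); [lra | nra].
Qed.

End ProfileToSurface.

(** * From the surface to the profile *)

Section SurfaceToProfile.

Variables (J I : R -> Prop) (x1 x2 r x1d x2d r1 x1dd x2dd r2 : R -> R) (k : R)
  (zu zv zuu zuv zvv : R -> R -> V4).
Hypotheses (HJ : is_open_interval J)
  (Hx1_smooth : smooth_on J x1) (Hx2_smooth : smooth_on J x2)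
  (Hr_pos : forall u, J u -> 0 < r u)
  (Hx1 : forall u, J u -> derivable_pt_lim x1 u (x1d u))
  (Hx2 : forall u, J u -> derivable_pt_lim x2 u (x2d u))
  (Hr : forall u, J u -> derivable_pt_lim r u (r1 u))
  (Hspeed : forall u, J u -> x1d u ^ 2 + x2d u ^ 2 - r1 u ^ 2 = 1)
  (HI : is_open_interval I) (HIJ : forall u, I u -> J u)
  (Hx1d : forall u, I u -> derivable_pt_lim x1d u (x1dd u))
  (Hx2d : forall u, I u -> derivable_pt_lim x2d u (x2dd u))
  (Hr1 : forall u, I u -> derivable_pt_lim r1 u (r2 u))
  (Hcurv : forall u, I u -> x1d u * x2dd u - x1dd u * x2d u <> 0)
  (Hk : k <> 0)
  (Hpart : partials2 (rot_surface x1 x2 r) (fun u _ => I u) zu zv zuu zuv zvv)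
  (HHk : forall u v, I u -> HH (zu u v) (zv u v) (zuu u v) (zuv u v) (zvv u v) = k).

Let curv u := x1d u * x2dd u - x1dd u * x2d u.
Let W u := sqrt (1 + r1 u ^ 2).

Lemma profile_speed_W u : I u -> x1d u ^ 2 + x2d u ^ 2 = W u ^ 2.
Proof.
  intros Hu. unfold W. rewrite sqrt_one_plus_sq_sq. specialize (Hspeed u (HIJ u Hu)). lra.
Qed.

Lemma profile_orth_on u : I u -> x1d u * x1dd u + x2d u * x2dd u - r1 u * r2 u = 0.
Proof.
  intros Hu.
  assert (Hd : derivable_pt_lim (fun t => x1d t ^ 2 + x2d t ^ 2 - r1 t ^ 2) u
                 (2 * x1d u * x1dd u + 2 * x2d u * x2dd u - 2 * r1 u * r2 u))
    by (apply D_minus; [apply D_plus|]; apply D_sq; auto).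
  assert (Hd0 : derivable_pt_lim (fun t => x1d t ^ 2 + x2d t ^ 2 - r1 t ^ 2) u 0).
  { apply D_ext_on with J (fun _ => 1); auto using D_const.
    intros t Ht. symmetry. auto. }
  assert (H := uniqueness_limite _ _ _ _ Hd Hd0). lra.
Qed.

Lemma HH_profile u : I u ->
  k = 1 / 4 * (x1dd u ^ 2 + x2dd u ^ 2 - r2 u ^ 2 - 2 * r2 u / r u - (1 + r1 u ^ 2) / r u ^ 2).
Proof.
  intros Hu. rewrite <- (HHk u 0 Hu).
  destruct (rot_surface_partials2_unique I x1 x2 r x1d x2d r1 x1dd x2dd r2
              (fun t Ht => Hx1 t (HIJ t Ht)) (fun t Ht => Hx2 t (HIJ t Ht))
              (fun t Ht => Hr t (HIJ t Ht)) Hx1d Hx2d Hr1 zu zv zuu zuv zvv HI Hpart u 0 Hu)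
    as (-> & -> & -> & ->).
  unfold rot_surface, rot_surface_dv. apply HH_rot; auto using profile_orth_on.
  apply Rgt_not_eq, Hr_pos; auto.
Qed.

Lemma Rfun_curvature s C : k = s * C ^ 2 ->
  forall u, I u -> Rfun s C r r1 r2 u = (r u * curv u) ^ 2.
Proof.
  intros HkC u Hu. unfold Rfun, curv.
  replace (s * (4 * C ^ 2 * r u ^ 2 * (1 + r1 u ^ 2))) with (4 * k * r u ^ 2 * (1 + r1 u ^ 2))
    by (rewrite HkC; ring).
  apply HH_rot_curvature; auto using profile_orth_on, HH_profile.
  apply Rgt_not_eq, Hr_pos; auto.
Qed.

Lemma curvature_continuous u : I u -> continuity_pt curv u.
Proof.
  intros Hu.
  assert (Hsmooth : forall x xd xdd, smooth_on J x ->
            (forall t, J t -> derivable_pt_lim x t (xd t)) ->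
            (forall t, I t -> derivable_pt_lim xd t (xdd t)) -> continuity_pt xdd u).
  { intros x xd xdd Hx Hxd Hxdd. apply smooth_on_continuous with I; auto.
    apply smooth_on_derivative with xd; auto.
    apply smooth_on_derivative with x; auto.
    now apply smooth_on_subset with J. }
  assert (Hcont : forall f f', (forall t, I t -> derivable_pt_lim f t (f' t)) ->
            continuity_pt f u)
    by (intros f f' Hf; apply derivable_continuous_pt; exists (f' u); apply Hf, Hu).
  apply continuity_pt_minus; apply continuity_pt_mult.
  - exact (Hcont _ _ Hx1d).
  - exact (Hsmooth _ _ _ Hx2_smooth Hx2 Hx2d).
  - exact (Hsmooth _ _ _ Hx1_smooth Hx1 Hx1d).
  - exact (Hcont _ _ Hx2d).
Qed.

Lemma phi_derivative_eq s C eta : k = s * C ^ 2 ->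
  (forall u, I u -> curv u = eta * Rabs (curv u)) ->
  forall u, I u ->
    eta * sqrt (Rfun s C r r1 r2 u) / (r u * (1 + r1 u ^ 2)) = curv u / (1 + r1 u ^ 2).
Proof.
  intros HkC Hsign u Hu.
  assert (Hr_u := Hr_pos u (HIJ u Hu)). assert (Hp := one_plus_sq_pos (r1 u)).
  rewrite (Rfun_curvature s C HkC u Hu), <- Rsqr_pow2, sqrt_Rsqr_abs, Rabs_mult,
    (Rabs_right (r u)) by lra.
  rewrite (Hsign u Hu) at 2. field. lra.
Qed.

Lemma profile_polar phi u0 : I u0 ->
  (forall u, I u -> derivable_pt_lim phi u (curv u / (1 + r1 u ^ 2))) ->
  x1d u0 = W u0 * cos (phi u0) -> x2d u0 = W u0 * sin (phi u0) ->
  forall u, I u -> x1d u = W u * cos (phi u) /\ x2d u = W u * sin (phi u).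
Proof.
  intros Hu0 Hphi Hx1d0 Hx2d0.
  apply (polar_form I x1d x2d x1dd x2dd W (fun u => r1 u * r2 u / W u) phi
           (fun u => curv u / (1 + r1 u ^ 2))) with u0; auto using profile_speed_W.
  - intros u Hu. apply D_sqrt_one_plus_sq. auto.
  - intros u Hu. apply sqrt_one_plus_sq_pos.
  - intros u Hu. assert (Horth := profile_orth_on u Hu).
    assert (HWu := sqrt_one_plus_sq_pos (r1 u)). unfold W. field_simplify; lra.
  - intros u Hu. unfold W, curv. rewrite sqrt_one_plus_sq_sq. field.
    apply Rgt_not_eq, one_plus_sq_pos.
Qed.

Lemma profile_of_rot_cmc : exists (C s eta : R) (phi : R -> R),
  C <> 0 /\ (s = 1 \/ s = -1) /\ (eta = 1 \/ eta = -1) /\ k = s * C ^ 2 /\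
  (forall u, I u -> 0 < Rfun s C r r1 r2 u) /\
  (forall u, I u -> derivable_pt_lim phi u
     (eta * sqrt (Rfun s C r r1 r2 u) / (r u * (1 + r1 u ^ 2)))) /\
  (forall u, I u -> x1d u = sqrt (1 + r1 u ^ 2) * cos (phi u)) /\
  (forall u, I u -> x2d u = sqrt (1 + r1 u ^ 2) * sin (phi u)).
Proof.
  destruct (signed_square k Hk) as (s & C & HC & Hs & HkC).
  destruct (continuous_nonzero_sign I curv HI curvature_continuous Hcurv)
    as (eta & Heta & Hsign).
  destruct (proj1 HI) as [u0 Hu0].
  destruct (exists_polar_angle (x1d u0) (x2d u0) (W u0)) as (th0 & Hcos & Hsin).
  { apply sqrt_one_plus_sq_pos. }
  { now apply profile_speed_W. }
  destruct (exists_antiderivative I (fun u => curv u / (1 + r1 u ^ 2)) HI) with u0 th0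
    as (phi & Hphi0 & Hphi); [|exact Hu0|].
  { intros u Hu.
    apply continuity_pt_div; [now apply curvature_continuous| |apply Rgt_not_eq, one_plus_sq_pos].
    apply derivable_continuous_pt. exists (0 + 2 * r1 u * r2 u).
    apply D_plus; [apply D_const | apply D_sq; auto]. }
  assert (Hpolar : forall u, I u -> x1d u = W u * cos (phi u) /\ x2d u = W u * sin (phi u))
    by (apply profile_polar with u0; rewrite ?Hphi0; auto).
  exists C, s, eta, phi. repeat split; auto.
  - intros u Hu. rewrite (Rfun_curvature s C HkC u Hu).
    assert (Hr_u := Hr_pos u (HIJ u Hu)). specialize (Hcurv u Hu).
    apply pow2_gt_0. apply Rmult_integral_contrapositive_currified; [lra | exact Hcurv].
  - intros u Hu. rewrite (phi_derivative_eq s C eta HkC Hsign u Hu). auto.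
  - intros u Hu. apply Hpolar, Hu.
  - intros u Hu. apply Hpolar, Hu.
Qed.

End SurfaceToProfile.

Theorem theorem3p1 :
  (forall (I : R -> Prop) (r r1 r2 phi x1 x2 : R -> R) (C s eta : R),
    is_open_interval I ->
    smooth_on I r ->
    (forall u, I u -> derivable_pt_lim r u (r1 u)) ->
    (forall u, I u -> derivable_pt_lim r1 u (r2 u)) ->
    (forall u, I u -> 0 < r u) ->
    C <> 0 ->
    (eta = 1 \/ eta = -1) ->
    (s = 1 \/ s = -1) ->
    (forall u, I u -> 0 < Rfun s C r r1 r2 u) ->
    (forall u, I u -> derivable_pt_lim phi u
        (eta * sqrt (Rfun s C r r1 r2 u) / (r u * (1 + r1 u ^ 2)))) ->
    (forall u, I u -> derivable_pt_lim x1 u (sqrt (1 + r1 u ^ 2) * cos (phi u))) ->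
    (forall u, I u -> derivable_pt_lim x2 u (sqrt (1 + r1 u ^ 2) * sin (phi u))) ->
    (* c is spacelike, parametrized by arc length *)
    (exists c' : R -> V4, forall u, I u ->
        deriv4 (profile x1 x2 r) u (c' u) /\ ip (c' u) (c' u) = 1) /\
    (exists x1d x2d x1dd x2dd : R -> R, forall u, I u ->
        derivable_pt_lim x1 u (x1d u) /\ derivable_pt_lim x2 u (x2d u) /\
        derivable_pt_lim x1d u (x1dd u) /\ derivable_pt_lim x2d u (x2dd u) /\
        x1d u * x2dd u - x1dd u * x2d u <> 0) /\
    (exists zu zv zuu zuv zvv : R -> R -> V4,
        partials2 (rot_surface x1 x2 r) (fun u _ => I u) zu zv zuu zuv zvv /\
        forall u v, I u ->
          lorentz_at (zu u v) (zv u v) /\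
          HH (zu u v) (zv u v) (zuu u v) (zuv u v) (zvv u v) = s * C ^ 2))
  /\
  (forall (J I : R -> Prop) (x1 x2 r x1d x2d r1 x1dd x2dd r2 : R -> R) (k : R),
    is_open_interval J ->
    smooth_on J x1 -> smooth_on J x2 -> smooth_on J r ->
    (forall u, J u -> 0 < r u) ->
    (forall u, J u -> derivable_pt_lim x1 u (x1d u)) ->
    (forall u, J u -> derivable_pt_lim x2 u (x2d u)) ->
    (forall u, J u -> derivable_pt_lim r u (r1 u)) ->
    (forall u, J u -> x1d u ^ 2 + x2d u ^ 2 - r1 u ^ 2 = 1) ->
    is_open_interval I ->
    (forall u, I u -> J u) ->
    (forall u, I u -> derivable_pt_lim x1d u (x1dd u)) ->
    (forall u, I u -> derivable_pt_lim x2d u (x2dd u)) ->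
    (forall u, I u -> derivable_pt_lim r1 u (r2 u)) ->
    (forall u, I u -> x1d u * x2dd u - x1dd u * x2d u <> 0) ->
    k <> 0 ->
    (exists zu zv zuu zuv zvv : R -> R -> V4,
        partials2 (rot_surface x1 x2 r) (fun u _ => I u) zu zv zuu zuv zvv /\
        forall u v, I u -> HH (zu u v) (zv u v) (zuu u v) (zuv u v) (zvv u v) = k) ->
    exists (C s eta : R) (phi : R -> R),
      C <> 0 /\ (s = 1 \/ s = -1) /\ (eta = 1 \/ eta = -1) /\
      k = s * C ^ 2 /\
      (forall u, I u -> 0 < Rfun s C r r1 r2 u) /\
      (forall u, I u -> derivable_pt_lim phi u
          (eta * sqrt (Rfun s C r r1 r2 u) / (r u * (1 + r1 u ^ 2)))) /\
      (forall u, I u -> x1d u = sqrt (1 + r1 u ^ 2) * cos (phi u)) /\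
      (forall u, I u -> x2d u = sqrt (1 + r1 u ^ 2) * sin (phi u))).
Proof.
  split.
  - intros I r r1 r2 phi x1 x2 C s eta _ _ Hr Hr1 Hr_pos _ Heta _ HR_pos Hphi Hx1 Hx2.
    split; [|split].
    + exact (profile_arc_length I r r1 phi x1 x2 Hr Hx1 Hx2).
    + exact (profile_curvature_neq0 I r r1 r2 phi x1 x2 C s eta
               Hr1 Hr_pos Heta HR_pos Hphi Hx1 Hx2).
    + exact (rot_surface_lorentz_cmc I r r1 r2 phi x1 x2 C s eta
               Hr Hr1 Hr_pos Heta HR_pos Hphi Hx1 Hx2).
  - intros J I x1 x2 r x1d x2d r1 x1dd x2dd r2 k HJ Hx1_smooth Hx2_smooth _ Hr_pos
      Hx1 Hx2 Hr Hspeed HI HIJ Hx1d Hx2d Hr1 Hcurv Hk (zu & zv & zuu & zuv & zvv & Hpart & HHk).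
    exact (profile_of_rot_cmc J I x1 x2 r x1d x2d r1 x1dd x2dd r2 k zu zv zuu zuv zvv
             HJ Hx1_smooth Hx2_smooth Hr_pos Hx1 Hx2 Hr Hspeed HI HIJ Hx1d Hx2d Hr1
             Hcurv Hk Hpart HHk).
Qed.
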